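(* Let $\mathcal{H}_R\cong\mathcal{H}_A$ be $d$-dimensional Hilbert spaces with computational bases $\{|i\rangle\}_{i=1}^d$, let $\Lambda\colon\mathcal{B}(\mathcal{H}_A)\to\mathcal{B}(\mathcal{H}_B)$ be a completely positive map, and let $\Phi_{RA}$ be the projector onto $|\Phi\rangle_{RA}=\frac{1}{\sqrt d}\sum_{i=1}^d|i\rangle_R\otimes|i\rangle_A$. Fix a unitary $U$ on $\mathcal{H}_R$, and let $\sigma_{RB}$ be a state satisfying $(\Gamma_{Z_U}\otimes\mathrm{id}_B)(\sigma_{RB})=\sigma_{RB}$. Then \[ \exp D_2\big((\mathcal{T}_U\otimes \Lambda)(\Phi_{RA})\,\big\|\, \sigma_{RB}\big) \geq \frac{1}{d}\exp D_2\big( (\mathrm{id}_R\otimes \Lambda)(\Phi_{RA})\,\big\|\, \sigma_{RB}\big). \]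
   Context: For a unitary $U$ on a $d$-dimensional space with computational basis $\{|i\rangle\}$, set $|u_i\rangle=U|i\rangle$. The dephasing map is $\mathcal{T}_U(\rho)=\sum_{i=1}^d |u_i\rangle\langle u_i|\rho|u_i\rangle\langle u_i|$, and $Z_U$ is the unitary with $Z_U|u_j\rangle=e^{2\pi i j/d}|u_j\rangle$. For an operator $X$, $\Gamma_X(\rho)=X\rho X^\dagger$. For positive semidefinite $\rho$ and $\sigma$, $\exp D_2(\rho\|\sigma)=\operatorname{tr}(\sigma^{-1/2}\rho\,\sigma^{-1/2}\rho)$ (the collision relative entropy exponentiated), with the inverse taken on the support of $\sigma$. *)

From HB Require Import structures.
From mathcomp Require Import all_boot all_order all_algebra.
From mathcomp Require Import complex mxtens.
From mathcomp Require Import reals trigo.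

Set Implicit Arguments.
Unset Strict Implicit.
Unset Printing Implicit Defensive.

Import Order.TTheory GRing.Theory Num.Theory.
Local Open Scope ring_scope.

(* A bipartite operator on C^m (x) C^n is a matrix 'M[C]_(m * n),      *)
(* indexed through mxtens_index (i, j) <-> |i> (x) |j> ; tensmx is the *)
(* Kronecker product A (x) B.                                          *)

Section QI.
Variable C : numClosedFieldType.

Definition adjmx m n (M : 'M[C]_(m, n)) : 'M[C]_(n, m) := (map_mx Num.conj M)^T.

Definition psdmx n (A : 'M[C]_n) : Prop :=
  adjmx A = A /\ forall v : 'rV[C]_n, 0 <= (v *m A *m adjmx v) 0 0.

Definition statemx n (A : 'M[C]_n) : Prop := psdmx A /\ \tr A = 1.

Definition unitary n (U : 'M[C]_n) : Prop := U *m adjmx U = 1%:M.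

(* (i,j) block of X on the first factor: the operator on the second
   factor given by <i| X |j> (partial matrix element). *)
Definition blockmx n d (X : 'M[C]_(n * d)) (i j : 'I_n) : 'M[C]_d :=
  \matrix_(a, b) X (mxtens_index (i, a)) (mxtens_index (j, b)).

Definition id_tens n d e (L : 'M[C]_d -> 'M[C]_e) (X : 'M[C]_(n * d))
  : 'M[C]_(n * e) :=
  \matrix_(p, q) L (blockmx X (mxtens_unindex p).1 (mxtens_unindex q).1)
                   (mxtens_unindex p).2 (mxtens_unindex q).2.

Definition completely_positive d e (L : 'M[C]_d -> 'M[C]_e) : Prop :=
  forall n (X : 'M[C]_(n * d)), psdmx X -> psdmx (@id_tens n d e L X).

Definition max_ent_vec d : 'cV[C]_(d * d) :=
  \col_k (if (mxtens_unindex k).1 == (mxtens_unindex k).2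
          then (sqrtC (d%:R))^-1 else 0).
Definition max_ent d : 'M[C]_(d * d) := max_ent_vec d *m adjmx (max_ent_vec d).

Definition ubasis d (U : 'M[C]_d) (i : 'I_d) : 'cV[C]_d := U *m delta_mx i 0.
Definition uproj d (U : 'M[C]_d) (i : 'I_d) : 'M[C]_d :=
  ubasis U i *m adjmx (ubasis U i).

Definition dephase d (U : 'M[C]_d) (rho : 'M[C]_d) : 'M[C]_d :=
  \sum_i uproj U i *m rho *m uproj U i.

Definition dephase_tens_id d e (U : 'M[C]_d) (Y : 'M[C]_(d * e)) : 'M[C]_(d * e) :=
  \sum_i (tensmx (uproj U i) (1%:M : 'M[C]_e)) *m Y *m (tensmx (uproj U i) (1%:M : 'M[C]_e)).

(* Z_U with Z_U |u_j> = w^j |u_j>, j = 1..d (w given) *)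
Definition ZU d (w : C) (U : 'M[C]_d) : 'M[C]_d :=
  \sum_(j < d) w ^+ j.+1 *: uproj U j.

Definition Gamma_tens_id d e (X : 'M[C]_d) (Y : 'M[C]_(d * e)) : 'M[C]_(d * e) :=
  (tensmx X (1%:M : 'M[C]_e)) *m Y *m adjmx (tensmx X (1%:M : 'M[C]_e)).

(* sigma^{-1/2}, inverse taken on the support, via the spectral
   decomposition sigma = P^-1 diag(D) P with P unitary (so P^-1 is the adjoint of P). *)
Definition inv_sqrt_supp n (s : 'M[C]_n) : 'M[C]_n :=
  let P := spectralmx s in
  let D := spectral_diag s in
  adjmx P *m diag_mx (\row_i (if 0 < D 0 i then (sqrtC (D 0 i))^-1 else 0)) *m P.

(* exp D_2(rho || sigma) = tr(sigma^{-1/2} rho sigma^{-1/2} rho) *)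
Definition expD2 n (rho sigma : 'M[C]_n) : C :=
  let S := inv_sqrt_supp sigma in \tr (S *m rho *m S *m rho).

End QI.

Arguments id_tens {C} n {d e} L X.
Arguments dephase_tens_id {C d} e U Y.
Arguments Gamma_tens_id {C d} e X Y.
Arguments max_ent C d.

Definition omega (R : realType) (d : nat) : R[i] :=
  ((cos (2 * pi / d%:R)) +i* (sin (2 * pi / d%:R)))%C.

From HB Require Import structures.
From mathcomp Require Import all_boot all_order all_algebra.
From mathcomp Require Import complex mxtens.
From mathcomp Require Import reals trigo.
From mathcomp Require Import ring lra.
Import Order.TTheory GRing.Theory Num.Theory.
Local Open Scope ring_scope.

(* Write P_i := |u_i><u_i| (x) 1 and Pinch X := sum_i P_i X P_i, so that
   T_U (x) id = Pinch.  The eigenvalues w^j of Z_U are pairwise distinct, so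
   invariance of sigma under Z_U (x) 1 kills the off-diagonal blocks
   P_i sigma P_j; hence sigma, and with it S := sigma^{-1/2}, commutes with
   every P_i.  Then tr(S Pinch(rho) S Pinch(rho)) = tr(S rho S Pinch(rho)) =: a
   and, with b := tr(S rho S rho), the identity
     sum_(i,j) (P_i - P_j) rho (P_i - P_j) = 2 (d Pinch(rho) - rho)
   gives 2 (d a - b) as a sum of traces of products of two positive
   semidefinite matrices, hence b <= d a. *)

Section Adjoint.
Context {C : numClosedFieldType}.

Lemma adjmxE m n (A : 'M[C]_(m, n)) i j : adjmx A i j = (A j i)^*.
Proof. by rewrite /adjmx !mxE. Qed.

Lemma adjmxK m n (A : 'M[C]_(m, n)) : adjmx (adjmx A) = A.
Proof. by apply/matrixP => i j; rewrite !adjmxE conjCK. Qed.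

Lemma adjmxM m n p (A : 'M[C]_(m, n)) (B : 'M[C]_(n, p)) :
  adjmx (A *m B) = adjmx B *m adjmx A.
Proof. by rewrite /adjmx map_mxM trmx_mul. Qed.

Lemma adjmxD m n (A B : 'M[C]_(m, n)) : adjmx (A + B) = adjmx A + adjmx B.
Proof. by apply/matrixP => i j; rewrite !mxE rmorphD. Qed.

Lemma adjmxB m n (A B : 'M[C]_(m, n)) : adjmx (A - B) = adjmx A - adjmx B.
Proof. by apply/matrixP => i j; rewrite !mxE rmorphB. Qed.

Lemma adjmxZ m n c (A : 'M[C]_(m, n)) : adjmx (c *: A) = c^* *: adjmx A.
Proof. by apply/matrixP => i j; rewrite !mxE rmorphM. Qed.

Lemma adjmx_sum m n I (r : seq I) (P : pred I) (F : I -> 'M[C]_(m, n)) :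
  adjmx (\sum_(i <- r | P i) F i) = \sum_(i <- r | P i) adjmx (F i).
Proof.
elim/big_rec2: _ => [|i x y _ <-]; last by rewrite adjmxD.
by apply/matrixP => i j; rewrite !mxE rmorph0.
Qed.

Lemma adjmx1 n : adjmx (1%:M : 'M[C]_n) = 1%:M.
Proof. by rewrite /adjmx map_mx1 trmx1. Qed.

Lemma adjmx_delta m n (i : 'I_m) (j : 'I_n) :
  adjmx (delta_mx i j : 'M[C]_(m, n)) = delta_mx j i.
Proof. by apply/matrixP => a b; rewrite adjmxE !mxE rmorph_nat andbC. Qed.

Lemma adjmx_diag n (D : 'rV[C]_n) : adjmx (diag_mx D) = diag_mx (map_mx Num.conj D).
Proof.
apply/matrixP => i j; rewrite !mxE eq_sym.
by case: eqP => [->|_]; rewrite ?mulr1n ?mulr0n ?rmorph0.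
Qed.

Lemma adjmx_tens m n p q (A : 'M[C]_(m, n)) (B : 'M[C]_(p, q)) :
  adjmx (A *t B) = adjmx A *t adjmx B.
Proof. by rewrite /adjmx map_mxT trmx_tens. Qed.

Lemma adjmx_trmxC n (A : 'M[C]_n) : adjmx A = (A ^t* )%sesqui.
Proof. by rewrite /adjmx map_trmx. Qed.

End Adjoint.

Section PositiveSemidefinite.
Context {C : numClosedFieldType}.

Lemma psdmx_herm {n} {A : 'M[C]_n} : psdmx A -> adjmx A = A.
Proof. by case. Qed.

Lemma psdmx_congr {m n} (X : 'M[C]_(m, n)) {A : 'M[C]_n} :
  psdmx A -> psdmx (X *m A *m adjmx X).
Proof.
move=> [hA pA]; split; first by rewrite !adjmxM adjmxK hA mulmxA.
by move=> v; have := pA (v *m X); rewrite adjmxM !mulmxA.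
Qed.

Lemma psdmx_rank1 m (v : 'cV[C]_m) : psdmx (v *m adjmx v).
Proof.
have psd1 : psdmx (1%:M : 'M[C]_1).
  split=> [|x]; first exact: adjmx1.
  by rewrite mulmx1 !mxE big_ord1 adjmxE mul_conjC_ge0.
by have := psdmx_congr v psd1; rewrite mulmx1.
Qed.

Lemma psdmx_diag_ge0 n (A : 'M[C]_n) i : psdmx A -> 0 <= A i i.
Proof.
by move=> [_ /(_ (delta_mx 0 i))]; rewrite adjmx_delta -rowE -colE !mxE.
Qed.

Lemma hermitian_normal {n} {A : 'M[C]_n} : adjmx A = A -> A \is normalmx.
Proof. by move=> hA; apply/normalmxP; rewrite -adjmx_trmxC hA. Qed.

Lemma unitarymx_adjmx {n} {P : 'M[C]_n} : P \is unitarymx ->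
  P *m adjmx P = 1%:M /\ adjmx P *m P = 1%:M.
Proof.
by move=> /unitarymxP; rewrite -adjmx_trmxC => PP; split; last exact: mulmx1C.
Qed.

Lemma hermitian_spectral_decomp {n} {A : 'M[C]_n} : adjmx A = A ->
  A = adjmx (spectralmx A) *m diag_mx (spectral_diag A) *m spectralmx A.
Proof.
move=> hA; have /orthomx_spectralP {1}-> := hermitian_normal hA.
by rewrite invmx_unitary ?spectral_unitarymx // -adjmx_trmxC.
Qed.

Lemma spectral_diag_conj {n} {A : 'M[C]_n} : adjmx A = A ->
  diag_mx (spectral_diag A) = spectralmx A *m A *m adjmx (spectralmx A).
Proof.
move=> hA; set P := spectralmx A.
have [PP1 _] := unitarymx_adjmx (spectral_unitarymx A).
rewrite [in RHS](hermitian_spectral_decomp hA) -/P.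
by rewrite !mulmxA PP1 mul1mx -mulmxA PP1 mulmx1.
Qed.

(* Diagonalise A = P^* D P: then tr(A B) = sum_k D_k (P B P^* )_kk, and both
   D_k and (P B P^* )_kk are diagonal entries of congruences of psd matrices. *)
Lemma mxtrace_mul_psd_ge0 n (A B : 'M[C]_n) :
  psdmx A -> psdmx B -> 0 <= \tr (A *m B).
Proof.
move=> pA pB; set P := spectralmx A; set D := spectral_diag A.
have eD := spectral_diag_conj (psdmx_herm pA).
rewrite (hermitian_spectral_decomp (psdmx_herm pA)) -!mulmxA mxtrace_mulC -!mulmxA.
rewrite /mxtrace; apply: sumr_ge0 => k _.
rewrite mul_diag_mx mxE mulmxA; apply: mulr_ge0; last exact/psdmx_diag_ge0/psdmx_congr.
have -> : D 0 k = diag_mx D k k by rewrite mxE eqxx mulr1n.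
by rewrite eD; apply/psdmx_diag_ge0/psdmx_congr.
Qed.

End PositiveSemidefinite.

Section SpectralFunction.
Context {C : numClosedFieldType}.

Definition spectral_fun {n} (g : C -> C) (A : 'M[C]_n) : 'M[C]_n :=
  adjmx (spectralmx A) *m diag_mx (\row_i g (spectral_diag A 0 i)) *m spectralmx A.

Lemma inv_sqrt_suppE {n} (s : 'M[C]_n) :
  inv_sqrt_supp s = spectral_fun (fun x => if 0 < x then (sqrtC x)^-1 else 0) s.
Proof. by []. Qed.

Lemma inv_sqrt_supp_herm {n} (s : 'M[C]_n) : adjmx (inv_sqrt_supp s) = inv_sqrt_supp s.
Proof.
rewrite /inv_sqrt_supp !adjmxM adjmxK adjmx_diag mulmxA.
congr (_ *m diag_mx _ *m _); apply/matrixP => a b; rewrite !mxE.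
case: ifP => x_gt0; last by rewrite rmorph0.
by apply/conj_Creal/gtr0_real; rewrite invr_gt0 sqrtC_gt0.
Qed.

(* Q D = D Q means Q_kl = 0 unless D_k = D_l, and then g D_k = g D_l. *)
Lemma diag_mx_comm_fun n (Q : 'M[C]_n) (D : 'rV[C]_n) (g : C -> C) :
  Q *m diag_mx D = diag_mx D *m Q ->
  Q *m diag_mx (\row_i g (D 0 i)) = diag_mx (\row_i g (D 0 i)) *m Q.
Proof.
move=> QD; apply/matrixP => k l; have /matrixP /(_ k l) := QD.
rewrite !mul_mx_diag !mul_diag_mx !mxE => eQ.
have [->|Qkl_neq0] := eqVneq (Q k l) 0; first by rewrite mulr0 mul0r.
have : Q k l * (D 0 l - D 0 k) = 0 by rewrite mulrBr eQ mulrC subrr.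
by move/eqP; rewrite mulf_eq0 (negbTE Qkl_neq0) subr_eq0 => /eqP ->; rewrite mulrC.
Qed.

Lemma spectral_fun_comm n (A X : 'M[C]_n) (g : C -> C) :
  adjmx A = A -> X *m A = A *m X -> X *m spectral_fun g A = spectral_fun g A *m X.
Proof.
move=> hA XA; rewrite /spectral_fun.
set P := spectralmx A; set G := diag_mx _; set Q := P *m X *m adjmx P.
have [PP1 P1P] := unitarymx_adjmx (spectral_unitarymx A).
have eX : X = adjmx P *m Q *m P by rewrite /Q !mulmxA P1P mul1mx -mulmxA P1P mulmx1.
have QG : Q *m G = G *m Q.
  apply: diag_mx_comm_fun; rewrite spectral_diag_conj // -/P /Q.
  rewrite !mulmxA -[P *m X *m adjmx P *m P]mulmxA P1P mulmx1 -[P *m X *m A]mulmxA XA.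
  by rewrite -[P *m A *m adjmx P *m P]mulmxA P1P mulmx1 !mulmxA.
clearbody Q; rewrite eX !mulmxA -[adjmx P *m Q *m P *m adjmx P]mulmxA PP1 mulmx1.
rewrite -[adjmx P *m G *m P *m adjmx P]mulmxA PP1 mulmx1.
by rewrite -[adjmx P *m Q *m G]mulmxA QG !mulmxA.
Qed.

End SpectralFunction.

Definition orthogonal_resolution {C : numClosedFieldType} {N d}
    (Pi : 'I_d -> 'M[C]_N) : Prop :=
  [/\ forall i j, Pi i *m Pi j = if i == j then Pi i else 0,
      \sum_i Pi i = 1%:M & forall i, adjmx (Pi i) = Pi i].

Definition pinching {C : numClosedFieldType} {N d}
    (Pi : 'I_d -> 'M[C]_N) (X : 'M[C]_N) : 'M[C]_N :=
  \sum_i Pi i *m X *m Pi i.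

Section Pinching.
Context {C : numClosedFieldType} {N d : nat} {Pi : 'I_d -> 'M[C]_N}.

Lemma pinchingE X : pinching Pi X = \sum_i Pi i *m X *m Pi i.
Proof. by []. Qed.

Hypothesis Pi_resolution : orthogonal_resolution Pi.

Lemma pinching_idem X : pinching Pi (pinching Pi X) = pinching Pi X.
Proof.
have [PiM _ _] := Pi_resolution.
apply: eq_bigr => i _; rewrite mulmx_sumr mulmx_suml (bigD1 i) //= big1 ?addr0.
  by rewrite !mulmxA PiM eqxx -mulmxA PiM eqxx.
by move=> j /negbTE ji; rewrite !mulmxA PiM eq_sym ji !mul0mx.
Qed.

Lemma mxtrace_pinchingC (S X Y : 'M[C]_N) : (forall i, S *m Pi i = Pi i *m S) ->
  \tr (S *m pinching Pi X *m S *m Y) = \tr (S *m X *m S *m pinching Pi Y).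
Proof.
move=> SPi; rewrite !pinchingE mulmx_sumr !mulmx_suml !linear_sum /=.
apply: eq_bigr => i _.
rewrite !mulmxA SPi -!mulmxA [Pi i *m (S *m Y)]mulmxA -SPi.
by rewrite mxtrace_mulC !mulmxA.
Qed.

Lemma sum_resolution_sandwich X : \sum_i \sum_j Pi i *m X *m Pi j = X.
Proof.
have [_ Pi_sum _] := Pi_resolution.
under eq_bigr => i _ do rewrite -mulmx_sumr Pi_sum mulmx1.
by rewrite -mulmx_suml Pi_sum mul1mx.
Qed.

Lemma sum_resolution_diff X :
  \sum_i \sum_j (Pi i - Pi j) *m X *m adjmx (Pi i - Pi j) = (pinching Pi X *+ d - X) *+ 2.
Proof.
have [_ _ Pi_herm] := Pi_resolution.
under eq_bigr => i _ do under eq_bigr => j _ do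
  rewrite adjmxB !Pi_herm !(mulmxBl, mulmxBr) opprB.
under eq_bigr => i _ do rewrite big_split /= !sumrB.
rewrite big_split /= !sumrB exchange_big /= sum_resolution_sandwich -!(pinchingE X).
by rewrite !sumr_const card_ord exchange_big sum_resolution_sandwich mulr2n.
Qed.

(* Each tr(S rho S (Pi i - Pi j) rho (Pi i - Pi j)) is a trace of a product of
   two psd matrices, and by sum_resolution_diff these add up to 2 (d a - b). *)
Lemma mxtrace_pinching_lower {S rho : 'M[C]_N} : (0 < d)%N -> adjmx S = S ->
  (forall i, S *m Pi i = Pi i *m S) -> psdmx rho ->
  d%:R^-1 * \tr (S *m rho *m S *m rho) <=
  \tr (S *m pinching Pi rho *m S *m pinching Pi rho).
Proof.
move=> d_gt0 S_herm SPi rho_psd.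
rewrite mxtrace_pinchingC // pinching_idem mulrC ler_pdivrMr ?ltr0n // mulr_natr.
have : 0 <= \tr (S *m rho *m S *m
              \sum_i \sum_j (Pi i - Pi j) *m rho *m adjmx (Pi i - Pi j)).
  rewrite !linear_sum; apply: sumr_ge0 => i _; rewrite !linear_sum; apply: sumr_ge0 => j _.
  apply: mxtrace_mul_psd_ge0; last exact: psdmx_congr.
  by rewrite -{2}S_herm; apply: psdmx_congr.
by rewrite sum_resolution_diff !(raddfMn, raddfB) /= pmulrn_lge0 // subr_ge0.
Qed.

Lemma offdiag_zero_comm X : (forall i j, i != j -> Pi i *m X *m Pi j = 0) ->
  forall i, Pi i *m X = X *m Pi i.
Proof.
have [_ Pi_sum _] := Pi_resolution.
move=> offdiag i.
have -> : Pi i *m X = Pi i *m X *m Pi i.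
  rewrite -{1}[Pi i *m X]mulmx1 -Pi_sum mulmx_sumr (bigD1 i) //= big1 ?addr0 //.
  by move=> j ji; apply: offdiag; rewrite eq_sym.
symmetry; rewrite -{1}[X]mul1mx -Pi_sum !mulmx_suml (bigD1 i) //= big1 ?addr0 //.
by move=> j ji; apply: offdiag.
Qed.

(* For Z := sum_j c_j Pi_j, invariance X = Z X Z^* multiplies the block
   Pi_i X Pi_j by c_i c_j^*, so that block vanishes when c_i c_j^* != 1. *)
Lemma phase_invariant_comm {c : 'I_d -> C} {X : 'M[C]_N} :
  (forall i j, i != j -> c i * (c j)^* != 1) ->
  (\sum_j c j *: Pi j) *m X *m adjmx (\sum_j c j *: Pi j) = X ->
  forall i, Pi i *m X = X *m Pi i.
Proof.
have [PiM _ Pi_herm] := Pi_resolution.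
move=> c_sep X_inv; set Z := \sum_j c j *: Pi j.
have PiZ i : Pi i *m Z = c i *: Pi i.
  rewrite mulmx_sumr (bigD1 i) //= big1 ?addr0 => [|j /negbTE ji];
    by rewrite -scalemxAr PiM ?eqxx // eq_sym ji scaler0.
have ZPi j : adjmx Z *m Pi j = (c j)^* *: Pi j.
  rewrite adjmx_sum mulmx_suml (bigD1 j) //= big1 ?addr0 => [|i /negbTE ij];
    by rewrite adjmxZ Pi_herm -scalemxAl PiM ?eqxx // ij scaler0.
apply: offdiag_zero_comm => i j ij.
have block_scaled : Pi i *m X *m Pi j = (c i * (c j)^* ) *: (Pi i *m X *m Pi j).
  rewrite -{1}X_inv !mulmxA PiZ -!mulmxA ZPi -scalemxAl -!scalemxAr scalerA.
  by rewrite mulrC !mulmxA.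
have : (1 - c i * (c j)^* ) *: (Pi i *m X *m Pi j) = 0.
  by rewrite scalerBl scale1r -block_scaled subrr.
by move/eqP; rewrite scaler_eq0 subr_eq0 eq_sym (negbTE (c_sep _ _ ij)) => /eqP.
Qed.

End Pinching.

Section TensorIdentity.
Context {R : pzRingType}.

Lemma tensmx_suml m n p q I (r : seq I) (P : pred I) (A : I -> 'M[R]_(m, n))
    (B : 'M[R]_(p, q)) :
  (\sum_(i <- r | P i) A i) *t B = \sum_(i <- r | P i) (A i *t B).
Proof.
apply/matrixP => k l; rewrite !mxE !summxE mulr_suml.
by apply: eq_bigr => i _; rewrite !mxE.
Qed.

Lemma tensmxZl m n p q c (A : 'M[R]_(m, n)) (B : 'M[R]_(p, q)) :
  (c *: A) *t B = c *: (A *t B).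
Proof. by apply/matrixP => k l; rewrite !mxE mulrA. Qed.

Lemma tensmx11 m n : (1%:M : 'M[R]_m) *t (1%:M : 'M[R]_n) = 1%:M.
Proof.
apply/matrixP => k l.
case: (mxtens_indexP k) => i0 i1; case: (mxtens_indexP l) => j0 j1.
rewrite tensmxE !mxE (inj_eq (can_inj (@mxtens_indexK _ _))) xpair_eqE.
by rewrite -natrM mulnb.
Qed.

End TensorIdentity.

Section DephasingResolution.
Context {C : numClosedFieldType}.

Lemma uproj_resolution d (U : 'M[C]_d) : unitary U -> orthogonal_resolution (uproj U).
Proof.
move=> U_unitary; have UU : adjmx U *m U = 1%:M by apply: mulmx1C.
split=> [i j||i]; last by rewrite /uproj adjmxM adjmxK.
- rewrite /uproj mulmxA -[ubasis U i *m _ *m ubasis U j]mulmxA.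
  have -> : adjmx (ubasis U i) *m ubasis U j = (1%:M : 'M[C]_1) *+ (i == j).
    rewrite /ubasis adjmxM -mulmxA [adjmx U *m _]mulmxA UU mul1mx adjmx_delta.
    by rewrite mul_delta_mx_cond; congr (_ *+ _); apply/matrixP => a b; rewrite !mxE !ord1.
  by case: eqP => [->|_]; rewrite ?mulr1n ?mulr0n ?mulmx1 ?mulmx0 ?mul0mx.
- have uprojE i : uproj U i = U *m delta_mx i i *m adjmx U.
    by rewrite /uproj /ubasis adjmxM adjmx_delta !mulmxA -[U *m _ *m _]mulmxA mul_delta_mx.
  under eq_bigr => i _ do rewrite uprojE.
  by rewrite -mulmx_suml -mulmx_sumr -mx1_sum_delta mulmx1.
Qed.

Lemma tensmx1_resolution N e d (Pi : 'I_d -> 'M[C]_N) : orthogonal_resolution Pi ->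
  orthogonal_resolution (fun i => Pi i *t (1%:M : 'M[C]_e)).
Proof.
case=> PiM Pi_sum Pi_herm; split=> [i j||i].
- by rewrite tensmx_mul mulmx1 PiM; case: eqP => // _; rewrite tens0mx.
- by rewrite -tensmx_suml Pi_sum tensmx11.
- by rewrite adjmx_tens Pi_herm adjmx1.
Qed.

Lemma ZU_tensmx1 d e (w : C) (U : 'M[C]_d) :
  ZU w U *t (1%:M : 'M[C]_e) = \sum_(j < d) w ^+ j.+1 *: (uproj U j *t 1%:M).
Proof. by rewrite /ZU tensmx_suml; under eq_bigr do rewrite tensmxZl. Qed.

Lemma dephase_tens_id_pinching d e (U : 'M[C]_d) (Y : 'M[C]_(d * e)) :
  dephase_tens_id e U Y = pinching (fun i => uproj U i *t 1%:M) Y.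
Proof. by []. Qed.

End DephasingResolution.

Section RootOfUnity.
Variable R : realType.

Definition cis (x : R) : R[i] := ((cos x) +i* (sin x))%C.

Lemma cisN x : (cis x)^* = cis (- x).
Proof. by rewrite /cis cosN sinN; apply: erefl. Qed.

Lemma cisD x y : cis x * cis y = cis (x + y).
Proof. by rewrite /cis cosD sinD [sin x * cos y + _]addrC; apply: erefl. Qed.

Lemma cisMn x n : cis x ^+ n = cis (x *+ n).
Proof.
elim: n => [|n IH]; first by rewrite expr0 mulr0n /cis cos0 sin0.
by rewrite exprS IH cisD mulrS.
Qed.

Lemma cos_2pi_frac_lt1 (d k : nat) : (0 < k < d)%N -> cos ((2 * pi / d%:R) *+ k) < 1 :> R.
Proof.
case/andP => k_gt0 k_lt_d; have d_gt0 := ltn_trans k_gt0 k_lt_d.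
pose y : R := pi * k%:R / d%:R.
have -> : (2 * pi / d%:R) *+ k = y *+ 2.
  by rewrite /y -[_ *+ k]mulr_natr -[_ *+ 2]mulr_natr; ring.
have y_pi : 0 < y < pi.
  rewrite /y !mulr_gt0 ?invr_gt0 ?ltr0n ?pi_gt0 //=.
  by rewrite -mulrA gtr_pMr ?pi_gt0 // ltr_pdivrMr ?ltr0n // mul1r ltr_nat.
have sin_y_gt0 := sin_gt0_pi y_pi.
have := sin2cos2 y; rewrite cos_mulr2n; nra.
Qed.

Lemma omega_pow_sep (d : nat) (i j : 'I_d) : i != j ->
  omega R d ^+ i.+1 * (omega R d ^+ j.+1)^* != 1.
Proof.
move=> ij; set t : R := 2 * pi / d%:R.
have cos_sep a b : (0 < a < b)%N -> (b <= d)%N -> cos (t *+ a - t *+ b) < 1.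
  move=> /andP[a_gt0 ab] bd.
  rewrite -opprB -mulrnBr ?(ltnW ab) // cosN.
  apply: cos_2pi_frac_lt1; rewrite subn_gt0 ab /=; apply: leq_trans bd.
  by rewrite ltn_subrL a_gt0 (ltn_trans a_gt0 ab).
have cos_lt1 : cos (t *+ i.+1 - t *+ j.+1) < 1.
  case: (ltngtP i j) => [lt|gt|eq]; last by rewrite (val_inj eq) eqxx in ij.
    exact: cos_sep.
  by rewrite -cosN opprB; apply: cos_sep.
have -> : omega R d = cis t by [].
rewrite !cisMn cisN cisD; apply: contraTneq cos_lt1 => /(congr1 (@complex.Re R)) /= ->.
by rewrite ltxx.
Qed.

End RootOfUnity.

Theorem lemma3p5 (R : realType) (d dB : nat) (d_gt0 : (0 < d)%N)
  (L : {linear 'M[R[i]]_d -> 'M[R[i]]_dB})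
  (L_cp : completely_positive L)
  (U : 'M[R[i]]_d) (U_unitary : unitary U)
  (sigma : 'M[R[i]]_(d * dB)) (sigma_state : statemx sigma)
  (sigma_inv : Gamma_tens_id dB (ZU (omega R d) U) sigma = sigma) :
  expD2 (dephase_tens_id dB U (id_tens d L (max_ent R[i] d))) sigma
  >= (d%:R)^-1 * expD2 (id_tens d L (max_ent R[i] d)) sigma.
Proof.
rewrite /expD2 /= dephase_tens_id_pinching.
set rho := id_tens d L _; set S := inv_sqrt_supp sigma; set Pi := fun i => _ *t _.
have Pi_res : orthogonal_resolution Pi.
  exact/tensmx1_resolution/uproj_resolution.
have rho_psd : psdmx rho by apply/L_cp/psdmx_rank1.
have sigma_herm : adjmx sigma = sigma by case: sigma_state => /psdmx_herm.
have sigma_Pi : forall i, Pi i *m sigma = sigma *m Pi i.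
  apply: (phase_invariant_comm Pi_res (@omega_pow_sep R d)).
  by rewrite -ZU_tensmx1.
have S_Pi i : S *m Pi i = Pi i *m S.
  by rewrite /S inv_sqrt_suppE; symmetry; apply: spectral_fun_comm.
exact (mxtrace_pinching_lower Pi_res d_gt0 (inv_sqrt_supp_herm sigma) S_Pi rho_psd).
Qed.
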